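(* Let $G$ be an $H(4,3)$-free graph and $u^*\in V(G)$. Put $N=N(u^* )$, $W=V(G)\setminus N[u^*]$, and $A^{+}=\{v\in N: v \text{ has at least one neighbor in } N\}$. Assume that the induced subgraph $G[A^{+}]$ is isomorphic to $K_4$. Let \[ U:=\{w\in W: w \text{ has exactly one neighbor in } A^{+}\}. \] Then $U$ is an independent set in $G$ (equivalently, in $G[W]$).
   Context: $H(4,3)$ is the graph obtained from a $4$-cycle and a triangle by identifying one vertex of the $4$-cycle with one vertex of the triangle; $H(4,3)$-free means containing no subgraph (not necessarily induced) isomorphic to $H(4,3)$. $N(u^* )$ is the open neighborhood of $u^*$ and $N[u^*]=N(u^* )\cup\{u^*\}$. *)

From mathcomp Require Import all_boot.
Set Implicit Arguments. Unset Strict Implicit. Unset Printing Implicit Defensive.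

Definition simple_graph (T : finType) (e : rel T) : Prop :=
  symmetric e /\ irreflexive e.

(* H(4,3): 4-cycle a-b-c-d-a and triangle a-x-y sharing vertex a (6 distinct vertices).
   G contains H(4,3) as a (not necessarily induced) subgraph. *)
Definition contains_H43 (T : finType) (e : rel T) : Prop :=
  exists a b c d x y : T,
    [&& uniq [:: a; b; c; d; x; y],
        e a b, e b c, e c d, e d a,
        e a x, e x y & e y a].

Definition H43_free (T : finType) (e : rel T) : Prop := ~ contains_H43 e.

Definition nbhd (T : finType) (e : rel T) (u : T) : {set T} := [set v | e u v].

Definition cnbhd (T : finType) (e : rel T) (u : T) : {set T} := u |: nbhd e u.

Definition induced_K4 (T : finType) (e : rel T) (S : {set T}) : Prop :=
  #|S| = 4 /\ {in S &, forall u v, u != v -> e u v}.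

Definition independent (T : finType) (e : rel T) (S : {set T}) : Prop :=
  {in S &, forall u v, ~~ e u v}.

From mathcomp Require Import all_boot.
From mathcomp Require Import zify.

Set Implicit Arguments.
Unset Strict Implicit.
Unset Printing Implicit Defensive.

(* Let [w1 ~ w2] lie outside N[u*], with neighbours [a1], [a2] in the clique.
   If [a1 = a2], the triangle [a1 w1 w2] hangs on the 4-cycle [a1 b u* c]
   through two further clique vertices [b], [c]; if [a1 != a2], the triangle
   [a1 b c] hangs on the 4-cycle [a1 w1 w2 a2]. Either way G contains H(4,3).
   So any 4-clique in the neighbourhood of u* works, and "exactly one
   neighbour" is only used as "at least one". *)

Lemma exists_two_in_setD2 (T : finType) (S : {set T}) (x y : T) :
  3 < #|S| -> exists b c, [/\ b \in S :\ x :\ y, c \in S :\ x :\ y & b != c].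
Proof.
move=> S_gt3; have : 1 < #|S :\ x :\ y|.
  have := cardsD1 x S; have := cardsD1 y (S :\ x).
  by case: (x \in S); case: (y \in S :\ x) => /=; lia.
by case/card_gt1P=> b [c [bS cS bc]]; exists b, c.
Qed.

Section CliqueInNeighbourhood.

Variables (T : finType) (e : rel T) (ustar : T) (A : {set T}).
Hypotheses (e_sym : symmetric e) (e_irr : irreflexive e).
Hypothesis A_sub_nbhd : {in A, forall v, e ustar v}.
Hypothesis A_K4 : induced_K4 e A.

Lemma clique_neq_center v : v \in A -> v != ustar.
Proof. by move=> vA; apply/eqP=> vu; have := A_sub_nbhd vA; rewrite vu e_irr. Qed.

Lemma clique_neq_outside v w : v \in A -> w \notin cnbhd e ustar -> v != w.
Proof.
move=> vA; rewrite !inE negb_or => /andP[_ uw].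
by apply/eqP=> vw; move: uw; rewrite -vw A_sub_nbhd.
Qed.

Lemma center_neq_outside w : w \notin cnbhd e ustar -> ustar != w.
Proof. by rewrite !inE negb_or eq_sym => /andP[]. Qed.

Lemma clique_adj v v' : v \in A -> v' \in A -> v != v' -> e v v'.
Proof. by move=> vA v'A; apply: A_K4.2. Qed.

Lemma H43_triangle_on_center_cycle a w1 w2 :
  a \in A -> w1 \notin cnbhd e ustar -> w2 \notin cnbhd e ustar ->
  e w1 a -> e w2 a -> e w1 w2 -> contains_H43 e.
Proof.
move=> aA w1o w2o w1a w2a w12.
have A_gt3 : 3 < #|A| by rewrite A_K4.1.
have [b [c []]] := exists_two_in_setD2 a a A_gt3.
rewrite !inE => /and3P[ba _ bA] /and3P[ca _ cA] bc.
have w1w2 : w1 != w2 by apply/eqP=> w1w2; move: w12; rewrite w1w2 e_irr.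
exists a, b, ustar, c, w1, w2; rewrite /= !inE !negb_or !andbT.
rewrite (eq_sym a b) (eq_sym a c) ba ca bc w1w2 (eq_sym ustar c).
have ab : a != b by rewrite eq_sym.
rewrite (clique_adj aA bA ab) (e_sym b) !A_sub_nbhd // (clique_adj cA aA) //.
rewrite (e_sym a) w1a w12 w2a.
rewrite !(center_neq_outside w1o, center_neq_outside w2o).
rewrite !(clique_neq_center aA, clique_neq_center bA, clique_neq_center cA).
by rewrite !(clique_neq_outside aA, clique_neq_outside bA, clique_neq_outside cA).
Qed.

Lemma H43_triangle_on_path_cycle a1 a2 w1 w2 :
  a1 \in A -> a2 \in A -> a1 != a2 ->
  w1 \notin cnbhd e ustar -> w2 \notin cnbhd e ustar ->
  e w1 a1 -> e w2 a2 -> e w1 w2 -> contains_H43 e.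
Proof.
move=> a1A a2A a12 w1o w2o w1a1 w2a2 w12.
have A_gt3 : 3 < #|A| by rewrite A_K4.1.
have [b [c []]] := exists_two_in_setD2 a1 a2 A_gt3.
rewrite !inE => /and3P[ba2 ba1 bA] /and3P[ca2 ca1 cA] bc.
have w1w2 : w1 != w2 by apply/eqP=> w1w2; move: w12; rewrite w1w2 e_irr.
exists a1, w1, w2, a2, b, c; rewrite /= !inE !negb_or !andbT.
rewrite (eq_sym a1 b) (eq_sym a1 c) (eq_sym a2 b) (eq_sym a2 c).
rewrite a12 ba1 ba2 ca1 ca2 bc w1w2.
have a1b : a1 != b by rewrite eq_sym.
have a21 : a2 != a1 by rewrite eq_sym.
rewrite (e_sym a1) w1a1 w12 w2a2 (clique_adj a2A a1A a21).
rewrite (clique_adj a1A bA a1b) (clique_adj bA cA) // (clique_adj cA a1A) //.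
rewrite !(eq_sym w1) !(eq_sym w2).
by rewrite !(clique_neq_outside a1A, clique_neq_outside a2A,
             clique_neq_outside bA, clique_neq_outside cA).
Qed.

Lemma outside_clique_neighbours_nonadjacent w1 w2 a1 a2 :
  H43_free e -> w1 \notin cnbhd e ustar -> w2 \notin cnbhd e ustar ->
  a1 \in A -> a2 \in A -> e w1 a1 -> e w2 a2 -> ~~ e w1 w2.
Proof.
move=> free w1o w2o a1A a2A w1a1 w2a2; apply/negP => w12; apply: free.
have [a1a2 | a12] := eqVneq a1 a2.
  rewrite a1a2 in w1a1.
  exact: (H43_triangle_on_center_cycle a2A w1o w2o w1a1 w2a2 w12).
exact: (H43_triangle_on_path_cycle a1A a2A a12 w1o w2o w1a1 w2a2 w12).
Qed.

End CliqueInNeighbourhood.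

Theorem lemma4p2 (T : finType) (e : rel T) (ustar : T) :
  simple_graph e -> H43_free e ->
  let N := nbhd e ustar in
  let W := ~: cnbhd e ustar in
  let Aplus := [set v in N | [exists w in N, e v w]] in
  induced_K4 e Aplus ->
  let U := [set w in W | #|[set a in Aplus | e w a]| == 1] in
  independent e U.
Proof.
move=> [e_sym e_irr] free N W Aplus K4 U.
have Aplus_sub_nbhd : {in Aplus, forall v, e ustar v}.
  by move=> v; rewrite !inE => /andP[].
have U_witness w : w \in U ->
    w \notin cnbhd e ustar /\ exists2 a, a \in Aplus & e w a.
  rewrite inE => /andP[wo /cards1P[a Ea]]; split; first by rewrite inE in wo.
  have : a \in [set a in Aplus | e w a] by rewrite Ea set11.
  by rewrite inE => /andP[aA wa]; exists a.
move=> w1 w2 /U_witness[w1o [a1 a1A w1a1]] /U_witness[w2o [a2 a2A w2a2]].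
exact: (outside_clique_neighbours_nonadjacent e_sym e_irr Aplus_sub_nbhd K4
          free w1o w2o a1A a2A w1a1 w2a2).
Qed.
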